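(* For every $g\ge 1$ and every degree value $d$ occurring in $\mathcal{H}_g$, $k_{\rm nn}(d)=g+1$.
   Context: $\mathcal{H}_1$ is the 4-cycle. For $g>1$, $\mathcal{H}_g$ is obtained from $\mathcal{H}_{g-1}$ by keeping every edge $\{u,v\}$ and adding two new vertices $w,w'$ with edges $\{u,w\},\{w,w'\},\{w',v\}$. For a degree value $d$, $k_{\rm nn}(d)$ is the total degree of all neighbors of all vertices of degree $d$ (summed over each such vertex and each of its neighbors) divided by the total degree of the vertices of degree $d$; i.e. the average degree of the nearest neighbors of vertices of degree $d$. *)

From mathcomp Require Import all_boot all_order all_algebra.
Set Implicit Arguments. Unset Strict Implicit. Unset Printing Implicit Defensive.
Import GRing.Theory Num.Theory.

(* A graph is (n, es): vertices 0..n-1, undirected edge list es (pairs). *)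
Definition graph := (nat * seq (nat * nat))%type.

Definition H1 : graph := (4, [:: (0,1); (1,2); (2,3); (3,0)]).

(* One generation step: keep every edge {u,v}; for the i-th edge add two new
   vertices w = n+2i, w' = n+2i+1 and edges {u,w},{w,w'},{w',v}. *)
Definition step (G : graph) : graph :=
  let: (n, es) := G in
  (n + 2 * size es,
   flatten [seq let: (i, (u, v)) := e in
              [:: (u, v); (u, n + 2 * i); (n + 2 * i, n + 2 * i + 1);
                  (n + 2 * i + 1, v)]
           | e <- zip (iota 0 (size es)) es]).

Definition H (g : nat) : graph := iter (g - 1) step H1.

Definition nverts (G : graph) : nat := G.1.
Definition adj (G : graph) (v u : nat) : bool :=
  has (fun e => ((e.1 == v) && (e.2 == u)) || ((e.1 == u) && (e.2 == v))) G.2.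
Definition deg (G : graph) (v : nat) : nat :=
  \sum_(u < nverts G | adj G v u) 1.

Definition knn (G : graph) (d : nat) : rat :=
  ((\sum_(v < nverts G | deg G v == d) \sum_(u < nverts G | adj G v u) deg G u)%:R
   / (\sum_(v < nverts G | deg G v == d) deg G v)%:R)%R.

From mathcomp Require Import all_boot all_order all_algebra zify.
Import GRing.Theory Num.Theory.

(* Write S(v) for the sum of the degrees of the neighbours of v.  By induction
   on g, for every weight f on degrees,
     sum_v f(deg v) S(v) = (g+1) sum_v f(deg v) deg v,
   and the weight "deg v = d" gives k_nn(d) = g+1.  In a step every old vertex
   doubles its degree and S(v) becomes 2 S(v) + 2 deg v, which is covered by
   the invariant for the weight f(2 _).  The 2m new vertices have degree 2 and
   the two vertices subdividing an old edge {u,v} have S-values 2 deg u + 2 and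
   2 deg v + 2; summing over edges gives 2 sum_v deg(v)^2 + 4m, and
   sum_v deg(v)^2 = sum_v S(v) = (g+1) 2m by the invariant for f = 1 and the
   handshake lemma, so the new vertices contribute (g+2) times their total
   degree 4m. *)

Lemma has_flatten (T : Type) (p : pred T) (ss : seq (seq T)) :
  has p (flatten ss) = has (has p) ss.
Proof. by elim: ss => //= s ss IH; rewrite has_cat IH. Qed.

Lemma all_flatten (T : Type) (p : pred T) (ss : seq (seq T)) :
  all p (flatten ss) = all (all p) ss.
Proof. by elim: ss => //= s ss IH; rewrite all_cat IH. Qed.

Lemma big_nat_pairs n m F :
  \sum_(0 <= u < n + 2 * m) F u =
  \sum_(0 <= u < n) F u + \sum_(0 <= i < m) (F (n + 2 * i) + F (n + 2 * i + 1)).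
Proof.
elim: m => [|m IH]; first by rewrite muln0 addn0 [X in _ + X]big_geq ?addn0.
rewrite (_ : n + 2 * m.+1 = (n + 2 * m).+2); last lia.
rewrite big_nat_recr ?leq0n // big_nat_recr ?leq0n // IH big_nat_recr //=.
by rewrite addn1 !addnA.
Qed.

Lemma sum_nat_eq1 N a F : \sum_(0 <= u < N) (u == a) * F u = (a < N) * F a.
Proof.
transitivity (\sum_(0 <= u < N | u == a) F u).
  by rewrite [RHS]big_mkcond; apply: eq_bigr => u _; case: eqP; rewrite ?mul1n.
by rewrite big_nat1_eq; case: (a < N); rewrite ?mul1n.
Qed.

Lemma sum_nat_pred2 N a b F : a < N -> b < N -> a != b ->
  \sum_(0 <= u < N | (u == a) || (u == b)) F u = F a + F b.
Proof.
move=> aN bN ab; rewrite big_mkcond.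
rewrite (eq_bigr (fun u => (u == a) * F u + (u == b) * F u)).
  by rewrite big_split /= !sum_nat_eq1 aN bN !mul1n.
move=> u _; case: eqP => [->|_]; first by rewrite (negPf ab) mul1n addn0.
by case: eqP; rewrite ?mul1n.
Qed.

Definition src (es : seq (nat * nat)) i := (nth (0, 0) es i).1.
Definition dst (es : seq (nat * nat)) i := (nth (0, 0) es i).2.

Definition edge_bounded n (es : seq (nat * nat)) := all (fun e => (e.1 < n) && (e.2 < n)) es.

Definition links x y (e : nat * nat) : bool :=
  ((e.1 == x) && (e.2 == y)) || ((e.1 == y) && (e.2 == x)).

Lemma adj_nth n es x y :
  adj (n, es) x y = has (fun i => links x y (src es i, dst es i)) (iota 0 (size es)).
Proof.
rewrite /adj /= -{1}(mkseq_nth (0, 0) es) has_map; apply: eq_has => i /=.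
by rewrite /src /dst; case: nth.
Qed.

Lemma adjC G x y : adj G x y = adj G y x.
Proof. by apply: eq_has => e; rewrite orbC. Qed.

Definition nbr_sum (G : graph) (F : nat -> nat) v :=
  \sum_(0 <= u < nverts G | adj G v u) F u.

Lemma deg_nbr_sum G v : deg G v = nbr_sum G (fun=> 1) v.
Proof. by rewrite /nbr_sum big_mkord. Qed.

Lemma sum_nbr_sum G F :
  \sum_(0 <= v < nverts G) nbr_sum G F v = \sum_(0 <= u < nverts G) F u * deg G u.
Proof.
rewrite (eq_bigr (fun v => \sum_(0 <= u < nverts G) if adj G v u then F u else 0)).
  rewrite exchange_big_nat; apply: eq_bigr => u _.
  rewrite deg_nbr_sum /nbr_sum [in RHS]big_mkcond big_distrr; apply: eq_bigr => v _.
  by rewrite adjC; case: adj => /=; rewrite ?muln1 ?muln0.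
by move=> v _; rewrite /nbr_sum big_mkcond.
Qed.

Definition incidence (es : seq (nat * nat)) v := \sum_(e <- es) ((e.1 == v) + (e.2 == v)).

Lemma incidence_nth es v :
  incidence es v = \sum_(0 <= i < size es) ((src es i == v) + (dst es i == v)).
Proof. by rewrite /incidence (big_nth (0, 0)). Qed.

Definition subdiv_edges n es i : seq (nat * nat) :=
  [:: (src es i, dst es i); (src es i, n + 2 * i);
      (n + 2 * i, n + 2 * i + 1); (n + 2 * i + 1, dst es i)].

Lemma step_edges n es :
  (step (n, es)).2 = flatten [seq subdiv_edges n es i | i <- iota 0 (size es)].
Proof.
rewrite /= -{2}(mkseq_nth (0, 0) es) /mkseq -{1}[iota 0 _]map_id zip_map -map_comp.
by congr flatten; apply: eq_map => i /=; rewrite /subdiv_edges /src /dst; case: nth.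
Qed.

Lemma adj_step n es x y : adj (step (n, es)) x y =
  has (fun i => has (links x y) (subdiv_edges n es i)) (iota 0 (size es)).
Proof. by rewrite /adj step_edges has_flatten has_map. Qed.

Lemma incidence_step n es v : incidence (step (n, es)).2 v =
  \sum_(0 <= i < size es) incidence (subdiv_edges n es i) v.
Proof. by rewrite {1}/incidence step_edges big_flatten big_map /index_iota subn0. Qed.

Lemma incidence_subdiv n es i v : incidence (subdiv_edges n es i) v =
  2 * ((src es i == v) + (dst es i == v) + (n + 2 * i == v) + (n + 2 * i + 1 == v)).
Proof. rewrite /incidence !big_cons big_nil /=; lia. Qed.

Variant step_vertex_spec n m : nat -> Type :=
  | StepOld v of v < n : step_vertex_spec n m v
  | StepLeft i of i < m : step_vertex_spec n m (n + 2 * i)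
  | StepRight i of i < m : step_vertex_spec n m (n + 2 * i + 1).

Lemma step_vertexP n m v : v < n + 2 * m -> step_vertex_spec n m v.
Proof.
move=> vlt; have [vn|nv] := ltnP v n; first exact: StepOld.
have im : (v - n) %/ 2 < m by lia.
have [odd_vn|even_vn] := boolP (odd (v - n)).
  by rewrite (_ : v = n + 2 * ((v - n) %/ 2) + 1); [exact: StepRight | lia].
by rewrite (_ : v = n + 2 * ((v - n) %/ 2)); [exact: StepLeft | lia].
Qed.

(* The degree counts distinct neighbours, the incidence counts edge ends; they
   agree on H_g because it has no loops or parallel edges, and the incidence is
   what a step adds to the degree of an old vertex. *)
Definition deg_incidence (G : graph) := forall v, v < nverts G -> deg G v = incidence G.2 v.

Definition deg_positive (G : graph) := forall v, v < nverts G -> 0 < deg G v.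

Definition knn_uniform (G : graph) (c : nat) := forall f : nat -> nat,
  \sum_(0 <= v < nverts G) f (deg G v) * nbr_sum G (deg G) v =
  c * \sum_(0 <= v < nverts G) f (deg G v) * deg G v.

Section Step.
Variables (n : nat) (es : seq (nat * nat)).
Hypothesis es_bounded : edge_bounded n es.
Let m := size es.
Local Notation G := (n, es).
Local Notation G' := (step (n, es)).

Lemma ends_bounded {i} : i < m -> (src es i < n) && (dst es i < n).
Proof. by move=> im; apply: (all_nthP (0, 0) es_bounded). Qed.

Lemma edge_bounded_step : edge_bounded (n + 2 * m) G'.2.
Proof.
rewrite /edge_bounded step_edges all_flatten all_map; apply/allP => i.
rewrite mem_iota add0n => /andP[_ im] /=; have := ends_bounded im; lia.
Qed.

Lemma adj_step_old x y : x < n -> y < n -> adj G' x y = adj G x y.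
Proof.
move=> xn yn; rewrite adj_step adj_nth.
by apply/hasP/hasP=> -[i im H]; exists i => //; move: H; rewrite /links /=; lia.
Qed.

Lemma adj_step_left i y : i < m ->
  adj G' (n + 2 * i) y = (y == src es i) || (y == n + 2 * i + 1).
Proof.
move=> im; rewrite adj_step; apply/hasP/idP => [[j]|].
  rewrite mem_iota => /andP[_ jm]; have := ends_bounded jm; have := ends_bounded im.
  rewrite /links /= add0n in jm *; have [->|ij] := eqVneq j i; lia.
move=> H; exists i; first by rewrite mem_iota.
rewrite /links /=; lia.
Qed.

Lemma adj_step_right i y : i < m ->
  adj G' (n + 2 * i + 1) y = (y == n + 2 * i) || (y == dst es i).
Proof.
move=> im; rewrite adj_step; apply/hasP/idP => [[j]|].
  rewrite mem_iota => /andP[_ jm]; have := ends_bounded jm; have := ends_bounded im.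
  rewrite /links /= add0n in jm *; have [->|ij] := eqVneq j i; lia.
move=> H; exists i; first by rewrite mem_iota.
rewrite /links /=; lia.
Qed.

Lemma nbr_sum_step_old F v : v < n ->
  nbr_sum G' F v = nbr_sum G F v +
    \sum_(0 <= i < m) ((src es i == v) * F (n + 2 * i) + (dst es i == v) * F (n + 2 * i + 1)).
Proof.
move=> vn; rewrite /nbr_sum /= big_mkcond big_nat_pairs [in RHS]big_mkcond; congr (_ + _).
  by apply: eq_big_nat => u /andP[_ un]; rewrite adj_step_old.
apply: eq_big_nat => i /andP[_ im]; have /andP[si di] := ends_bounded im.
rewrite !(adjC _ v) adj_step_left // adj_step_right //.
have -> : (v == n + 2 * i + 1) = false by lia.
have -> : (v == n + 2 * i) = false by lia.
by rewrite orbF !(eq_sym v); case: eqP; case: eqP; rewrite ?mul1n.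
Qed.

Lemma nbr_sum_step_left F i : i < m ->
  nbr_sum G' F (n + 2 * i) = F (src es i) + F (n + 2 * i + 1).
Proof.
move=> im; have /andP[si di] := ends_bounded im.
rewrite /nbr_sum (eq_bigl _ _ (fun u => adj_step_left i u im)) //= sum_nat_pred2 //; lia.
Qed.

Lemma nbr_sum_step_right F i : i < m ->
  nbr_sum G' F (n + 2 * i + 1) = F (n + 2 * i) + F (dst es i).
Proof.
move=> im; have /andP[si di] := ends_bounded im.
rewrite /nbr_sum (eq_bigl _ _ (fun u => adj_step_right i u im)) //= sum_nat_pred2 //; lia.
Qed.

Lemma incidence_step_old v : v < n -> incidence G'.2 v = 2 * incidence es v.
Proof.
move=> vn; rewrite incidence_step incidence_nth big_distrr; apply: eq_big_nat => i _.
rewrite incidence_subdiv; have -> : (n + 2 * i == v) = false by lia.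
have -> : (n + 2 * i + 1 == v) = false by lia.
by rewrite !addn0.
Qed.

Lemma incidence_step_new j : n <= j < n + 2 * m -> incidence G'.2 j = 2.
Proof.
move=> /andP[nj jlt]; rewrite incidence_step.
rewrite (eq_big_nat _ _ (F2 := fun i => (i == (j - n) %/ 2) * 2)).
  by rewrite sum_nat_eq1 (_ : (j - n) %/ 2 < m) //; lia.
move=> i /andP[_ im]; have := ends_bounded im; rewrite incidence_subdiv; lia.
Qed.

Lemma deg_step_old v : v < n -> deg G' v = deg G v + incidence es v.
Proof.
move=> vn; rewrite !deg_nbr_sum nbr_sum_step_old // incidence_nth.
by congr (_ + _); apply: eq_bigr => i _; rewrite !muln1.
Qed.

Lemma deg_step_left i : i < m -> deg G' (n + 2 * i) = 2.
Proof. by move=> im; rewrite deg_nbr_sum nbr_sum_step_left. Qed.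

Lemma deg_step_right i : i < m -> deg G' (n + 2 * i + 1) = 2.
Proof. by move=> im; rewrite deg_nbr_sum nbr_sum_step_right. Qed.

Lemma sum_edge_ends f :
  \sum_(0 <= i < m) (f (src es i) + f (dst es i)) = \sum_(0 <= v < n) f v * incidence es v.
Proof.
under [RHS]eq_bigr => v _ do rewrite incidence_nth big_distrr.
rewrite exchange_big_nat; apply: eq_big_nat => i /andP[_ im].
have /andP[si di] := ends_bounded im.
rewrite (eq_bigr (fun v => (v == src es i) * f v + (v == dst es i) * f v)).
  by rewrite big_split /= !sum_nat_eq1 si di !mul1n.
by move=> v _ /=; rewrite mulnDr !(eq_sym v) ![f v * _]mulnC.
Qed.

Hypothesis deg_inc : deg_incidence G.

Lemma deg_step_double v : v < n -> deg G' v = 2 * deg G v.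
Proof. by move=> vn; rewrite deg_step_old // -deg_inc // addnn mul2n. Qed.

Lemma deg_incidence_step : deg_incidence G'.
Proof.
move=> v /step_vertexP[{}v vn | i im | i im].
- by rewrite deg_step_double // incidence_step_old // deg_inc.
- by rewrite deg_step_left // incidence_step_new //; lia.
- by rewrite deg_step_right // incidence_step_new //; lia.
Qed.

Lemma deg_positive_step : deg_positive G -> deg_positive G'.
Proof.
move=> pos v /step_vertexP[{}v vn | i im | i im].
- by rewrite deg_step_double // muln_gt0 pos.
- by rewrite deg_step_left.
- by rewrite deg_step_right.
Qed.

Lemma nbr_deg_step_old v : v < n ->
  nbr_sum G' (deg G') v =
  2 * nbr_sum G (deg G) v + 2 * deg G v.
Proof.
move=> vn; rewrite nbr_sum_step_old //; congr (_ + _).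
  rewrite /nbr_sum big_distrr /= big_mkcond [RHS]big_mkcond.
  by apply: eq_big_nat => u /andP[_ un] /=; case: adj; rewrite ?deg_step_double ?muln0.
rewrite deg_inc // incidence_nth big_distrr; apply: eq_big_nat => i /andP[_ im] /=.
by rewrite deg_step_left // deg_step_right // mulnDr ![2 * _]mulnC.
Qed.

Lemma nbr_deg_step_left i : i < m ->
  nbr_sum G' (deg G') (n + 2 * i) = 2 * deg G (src es i) + 2.
Proof.
move=> im; have /andP[si _] := ends_bounded im.
by rewrite nbr_sum_step_left // deg_step_double // deg_step_right.
Qed.

Lemma nbr_deg_step_right i : i < m ->
  nbr_sum G' (deg G') (n + 2 * i + 1) = 2 + 2 * deg G (dst es i).
Proof.
move=> im; have /andP[_ di] := ends_bounded im.
by rewrite nbr_sum_step_right // deg_step_left // deg_step_double.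
Qed.

Lemma sum_deg : \sum_(0 <= v < n) deg G v = 2 * m.
Proof.
rewrite (eq_big_nat _ _ (F2 := fun v => 1 * incidence es v)).
  by rewrite -sum_edge_ends sum_nat_const_nat subn0 mulnC.
by move=> v /andP[_ vn]; rewrite mul1n deg_inc.
Qed.

Lemma sum_edge_deg c : knn_uniform G c ->
  \sum_(0 <= i < m) (deg G (src es i) + deg G (dst es i)) = c * (2 * m).
Proof.
move=> unif; rewrite sum_edge_ends -sum_deg.
rewrite (eq_big_nat _ _ (F2 := fun v => deg G v * deg G v)); last first.
  by move=> v /andP[_ vn]; rewrite deg_inc.
have := unif (fun=> 1); rewrite -!big_distrr /= !mul1n => <-.
by symmetry; exact: (sum_nbr_sum G).
Qed.

Lemma knn_uniform_step c : knn_uniform G c -> knn_uniform G' c.+1.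
Proof.
move=> unif f; rewrite -[nverts _]/(n + 2 * m) !big_nat_pairs.
set Z := \sum_(0 <= v < n) f (2 * deg G v) * deg G v.
have old_nbr : \sum_(0 <= v < n) f (deg G' v) *
    nbr_sum G' (deg G') v = 2 * (c * Z) + 2 * Z.
  rewrite -(unif (fun d => f (2 * d))) !big_distrr -big_split.
  apply: eq_big_nat => v /andP[_ vn] /=.
  by rewrite deg_step_double // nbr_deg_step_old // mulnDr !mulnA ![f _ * 2]mulnC.
have old_deg : \sum_(0 <= v < n) f (deg G' v) * deg G' v = 2 * Z.
  rewrite big_distrr; apply: eq_big_nat => v /andP[_ vn] /=.
  by rewrite deg_step_double // mulnCA.
have new_nbr : \sum_(0 <= i < m)
    (f (deg G' (n + 2 * i)) *
       nbr_sum G' (deg G') (n + 2 * i) +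
     f (deg G' (n + 2 * i + 1)) *
       nbr_sum G' (deg G') (n + 2 * i + 1)) =
    f 2 * (2 * (c * (2 * m)) + 4 * m).
  have -> : 4 * m = \sum_(0 <= i < m) 4 by rewrite sum_nat_const_nat subn0 mulnC.
  rewrite -(sum_edge_deg _ unif).
  rewrite big_distrr -big_split big_distrr; apply: eq_big_nat => i /andP[_ im] /=.
  rewrite deg_step_left // deg_step_right // nbr_deg_step_left // nbr_deg_step_right //.
  by rewrite -mulnDr; congr (f 2 * _); lia.
have new_deg : \sum_(0 <= i < m)
    (f (deg G' (n + 2 * i)) * deg G' (n + 2 * i) +
     f (deg G' (n + 2 * i + 1)) * deg G' (n + 2 * i + 1)) =
    f 2 * (4 * m).
  have -> : 4 * m = \sum_(0 <= i < m) 4 by rewrite sum_nat_const_nat subn0 mulnC.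
  rewrite big_distrr.
  by apply: eq_big_nat => i /andP[_ im] /=; rewrite deg_step_left // deg_step_right // -mulnDr.
rewrite old_nbr old_deg new_nbr new_deg; nia.
Qed.

End Step.

Lemma deg_H1 v : v < 4 -> deg H1 v = 2.
Proof. by case: v => [|[|[|[|v]]]] // _; rewrite deg_nbr_sum /nbr_sum unlock. Qed.

Lemma nbr_deg_H1 v : v < 4 -> nbr_sum H1 (deg H1) v = 4.
Proof. by case: v => [|[|[|[|v]]]] // _; rewrite /nbr_sum unlock /= !deg_H1. Qed.

Record knn_invariant (G : graph) (c : nat) : Prop := KnnInvariant {
  inv_edge_bounded : edge_bounded (nverts G) G.2;
  inv_deg_incidence : deg_incidence G;
  inv_deg_positive : deg_positive G;
  inv_knn_uniform : knn_uniform G c }.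

Lemma knn_invariant_H1 : knn_invariant H1 2.
Proof.
split=> //.
- move=> v v4; rewrite deg_H1 //.
  by move: v4; case: v => [|[|[|[|v]]]] // _; rewrite /incidence unlock.
- by move=> v v4; rewrite deg_H1.
- move=> f; rewrite (eq_big_nat _ _ (F2 := fun=> f 2 * 4)); last first.
    by move=> v /andP[_ v4]; rewrite deg_H1 // nbr_deg_H1.
  rewrite [X in _ = _ * X](eq_big_nat _ _ (F2 := fun=> f 2 * 2)); last first.
    by move=> v /andP[_ v4]; rewrite deg_H1.
  by rewrite !sum_nat_const_nat; lia.
Qed.

Lemma knn_invariant_step n es c :
  knn_invariant (n, es) c -> knn_invariant (step (n, es)) c.+1.
Proof.
case=> bounded deg_inc pos unif; split.
- exact: edge_bounded_step.
- exact: deg_incidence_step.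
- exact: deg_positive_step.
- exact: knn_uniform_step.
Qed.

Lemma knn_invariant_H g : 1 <= g -> knn_invariant (H g) g.+1.
Proof.
case: g => // g _; rewrite /H subSS subn0.
elim: g => [|g IH]; first exact: knn_invariant_H1.
by rewrite iterS; case: (iter g step H1) IH => n es; exact: knn_invariant_step.
Qed.

Lemma knn_uniform_knn G c d : knn_uniform G c -> deg_positive G ->
  (exists v : 'I_(nverts G), deg G v = d) -> knn G d = (c%:R)%R.
Proof.
move=> unif pos [v0 dv0].
have sum_deg_eq F : \sum_(0 <= v < nverts G) (deg G v == d) * F v =
    \sum_(v < nverts G | deg G v == d) F v.
  by rewrite big_mkord [RHS]big_mkcond; apply: eq_bigr => v _; case: eqP; rewrite ?mul1n.
have den_pos : 0 < \sum_(v < nverts G | deg G v == d) deg G v.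
  by rewrite (bigD1 v0) ?dv0 //= ltn_addr // -dv0 pos.
rewrite /knn (eq_bigr (fun v : 'I_(nverts G) => nbr_sum G (deg G) v)); last first.
  by move=> v _; rewrite /nbr_sum big_mkord.
rewrite -!sum_deg_eq (unif (fun k => k == d)) natrM mulfK // pnatr_eq0 -lt0n.
by rewrite sum_deg_eq.
Qed.

Theorem proposition7 (g d : nat) :
  1 <= g ->
  (exists v : 'I_(nverts (H g)), deg (H g) v = d) ->
  knn (H g) d = ((g.+1)%:R)%R :> rat.
Proof.
move=> g_ge1; have [_ _ pos unif] := knn_invariant_H _ g_ge1.
exact: knn_uniform_knn.
Qed.
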